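(* The following hold: (1) If $C$ is a one-sided error PACA with time complexity $T$, then there is a two-sided error PACA $C'$ with time complexity $O(T)$ such that $L(C')=L(C)$. (2) There is a language $L$ that is accepted by some constant-time two-sided error PACA but is not accepted by any one-sided error PACA with time complexity $T(n)=o(\sqrt{n})$.
   Context: A (bounded, one-dimensional) cellular automaton (CA) has a finite state set $Q$, a boundary symbol $\$\notin Q$, and a local transition function $\delta\colon Q_\$\times Q\times Q_\$\to Q$ where $Q_\$=Q\cup\{\$\}$. On a configuration $s=s_0\cdots s_{n-1}\in Q^n$ the global map is $\Delta(s)=\delta(\$,s_0,s_1)\,\delta(s_0,s_1,s_2)\cdots\delta(s_{n-2},s_{n-1},\$)$; cell $i$ is position $i\in\{0,\dots,n-1\}$. A PACA (probabilistic ACA) $C$ has a finite state set $Q$, an input alphabet $\Sigma\subseteq Q$, a set $A\subseteq Q$ of accepting states and two local transition functions $\delta_0,\delta_1$; at every step every cell independently tosses a fair coin $c\in\{0,1\}$ and updates its state by $\delta_c$ (applied to its left neighbor, itself, its right neighbor, with $\$$ beyond the borders). On input $x\in\Sigma^n$ the initial configuration is $x$; a computation is accepting if at some step all $n$ cells are simultaneously in $A$. $C$ has time complexity $T\colon\mathbb N_+\to\mathbb N_0$ if for every input $x$ of length $n$ every accepting computation reaches $A^n$ for the first time at a step $<T(n)$; then the coin tosses may be viewed as a matrix $R\in\{0,1\}^{T(n)\times n}$ ($R_j(i)$ = coin of cell $i$ in step $j$), and $C(x,R)\in\{0,1\}$ indicates acceptance; probabilities are over uniformly random $R$. For $p\in[0,1)$,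 $C$ is a one-sided $p$-error PACA for $L$ if for all $x$: $x\in L\iff\Pr[C(x,R)=1]\ge 1-p$ and $x\notin L\iff \Pr[C(x,R)=1]=0$; a one-sided error PACA means $p=1/2$. For $p<1/2$, $C$ is a two-sided $p$-error PACA for $L$ if $x\in L\iff\Pr[C(x,R)=1]\ge1-p$ and $x\notin L\iff\Pr[C(x,R)=1]\le p$; a two-sided error PACA means $p=1/3$. In both cases $L(C)=L$. Languages are subsets of $\Sigma^+$ (the empty word is never considered). A PACA is constant-time if its time complexity is bounded by a constant. *)

From HB Require Import structures.
From mathcomp Require Import all_boot all_order all_algebra.
Set Implicit Arguments. Unset Strict Implicit. Unset Printing Implicit Defensive.
Import Order.TTheory GRing.Theory Num.Theory.

(* The input alphabet is a subset of the
   state set; we model Sigma ⊆ Q by an injective embedding [inp].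
   The boundary symbol $ is [None] (neighbours have type [option st]). *)
Record PACA (Sigma : finType) := MkPACA {
  st : finType;
  inp : Sigma -> st;
  inp_inj : injective inp;
  acc : {set st};
  delta0 : option st -> st -> option st -> st;
  delta1 : option st -> st -> option st -> st
}.

Section PACADefs.
Variables (Sigma : finType) (C : PACA Sigma).

Definition gstep (coin : nat -> bool) (s : seq (st C)) : seq (st C) :=
  map (fun p : nat * st C =>
         let (i, q) := p in
         let l := if i is k.+1 then nth None (map Some s) k else None in
         let r := nth None (map Some s) i.+1 in
         (if coin i then @delta1 _ C else @delta0 _ C) l q r)
      (zip (iota 0 (size s)) s).

Fixpoint run (r : nat -> nat -> bool) (s : seq (st C)) (j : nat) : seq (st C) :=
  if j is j'.+1 then gstep (r j') (run r s j') else s.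

Definition all_acc (s : seq (st C)) : bool := all (fun q => q \in @acc _ C) s.

Definition init (x : seq Sigma) : seq (st C) := map (@inp _ C) x.

Definition has_time (T : nat -> nat) : Prop :=
  forall x : seq Sigma, 0 < size x ->
  forall (r : nat -> nat -> bool) (j : nat),
    all_acc (run r (init x) j) ->
    exists2 j', j' < T (size x) & all_acc (run r (init x) j').

Definition coins (t n : nat) (R : {ffun 'I_t * 'I_n -> bool}) : nat -> nat -> bool :=
  fun j i => match insub j, insub i with
             | Some j', Some i' => R (j', i')
             | _, _ => false
             end.

Definition accepts (T : nat -> nat) (x : seq Sigma)
    (R : {ffun 'I_(T (size x)) * 'I_(size x) -> bool}) : bool :=
  [exists j : 'I_(T (size x)), all_acc (run (coins R) (init x) j)].

Definition acc_prob (T : nat -> nat) (x : seq Sigma) : rat :=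
  (#|[set R : {ffun 'I_(T (size x)) * 'I_(size x) -> bool} | accepts R]|%:R
    / (2 ^ (T (size x) * size x))%:R)%R.

(* Languages are subsets of Sigma^+; only nonempty words are constrained. *)
Definition one_sided_p (T : nat -> nat) (p : rat) (L : seq Sigma -> Prop) : Prop :=
  has_time T /\
  forall x : seq Sigma, 0 < size x ->
    (L x <-> (1 - p <= acc_prob T x)%R) /\ (~ L x <-> acc_prob T x = 0%R).

Definition two_sided_p (T : nat -> nat) (p : rat) (L : seq Sigma -> Prop) : Prop :=
  has_time T /\
  forall x : seq Sigma, 0 < size x ->
    (L x <-> (1 - p <= acc_prob T x)%R) /\ (~ L x <-> (acc_prob T x <= p)%R).

Definition one_sided (T : nat -> nat) (L : seq Sigma -> Prop) : Prop :=
  one_sided_p T (1 / 2)%R L.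

Definition two_sided (T : nat -> nat) (L : seq Sigma -> Prop) : Prop :=
  two_sided_p T (1 / 3)%R L.

End PACADefs.

Definition bigO (f g : nat -> nat) : Prop :=
  exists c N, forall n, N <= n -> 0 < n -> f n <= c * g n.

(* T(n) = o(sqrt n): for every k >= 1, eventually k*T(n) <= sqrt n,
   i.e. (k*T(n))^2 <= n. *)
Definition little_o_sqrt (T : nat -> nat) : Prop :=
  forall k, 0 < k -> exists N, forall n, N <= n -> (k * T n) ^ 2 <= n.

(* (1) Run two independent copies of C on alternate steps and accept whenever
   one of them would: an acceptance probability p becomes
   1 - (1 - p)^2, which is 0 for p = 0 and at least 3/4 for p >= 1/2.
   (2) Take for L the binary words with at most one 1.  A 1-cell may accept at
   step 1 (probability 1/2) or at step 2 (probability 1/4), so in constant time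
   a word with a single 1 is accepted with probability 3/4, and a word with two
   1's with probability at most 1/4 + 1/16.  Conversely, after j steps a cell
   has only seen the inputs within distance j.  If T(n) = t with 16 t^2 <= n,
   put 2t + 3 words with a single 1 at mutually distant positions: a coin
   matrix accepting two of them at the same step also accepts the word with
   both 1's, which is outside L, so by one-sided error every coin matrix
   accepts at most t + 1 of them, whereas each of them is accepted by at least
   half of all coin matrices. *)

From mathcomp Require Import all_boot all_order all_algebra.
From mathcomp Require Import zify ring lra.
From Stdlib Require Import FunctionalExtensionality Classical.
Set Implicit Arguments. Unset Strict Implicit. Unset Printing Implicit Defensive.
Import Order.TTheory GRing.Theory Num.Theory.

Lemma card_coin_matrices t n : #|{ffun 'I_t * 'I_n -> bool}| = 2 ^ (t * n).
Proof. by rewrite card_ffun card_bool card_prod !card_ord. Qed.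

Section Runs.
Variables (Sigma : finType) (C : PACA Sigma).

Definition nbr (s : seq (st C)) k := nth None (map Some s) k.

Lemma nbrE d s k : nbr s k = if k < size s then Some (nth d s k) else None.
Proof.
rewrite /nbr; case: ltnP => h; first by rewrite (nth_map d).
by rewrite nth_default // size_map.
Qed.

Lemma size_gstep coin (s : seq (st C)) : size (gstep coin s) = size s.
Proof. by rewrite /gstep size_map size_zip size_iota minnn. Qed.

Lemma nth_gstep coin (s : seq (st C)) d d' i : i < size s ->
  nth d' (gstep coin s) i =
  (if coin i then @delta1 _ C else @delta0 _ C)
    (if i is k.+1 then nbr s k else None) (nth d s i) (nbr s i.+1).
Proof.
move=> hi; rewrite /gstep (nth_map (0, d)) ?size_zip ?size_iota ?minnn //.
by rewrite nth_zip ?size_iota // nth_iota.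
Qed.

Lemma size_run r (s : seq (st C)) j : size (run r s j) = size s.
Proof. by elim: j => //= j IH; rewrite size_gstep. Qed.

Lemma size_init x : size (init C x) = size x.
Proof. exact: size_map. Qed.

Lemma nth_init (x : seq Sigma) a e : nth (inp C a) (init C x) e = inp C (nth a x e).
Proof.
case: (ltnP e (size x)) => h; first by rewrite (nth_map a).
by rewrite !nth_default // size_map.
Qed.

Lemma nth_run_local r (s1 s2 : seq (st C)) d t c :
  size s1 = size s2 -> c < size s1 ->
  (forall e, c <= e + t -> e <= c + t -> nth d s1 e = nth d s2 e) ->
  nth d (run r s1 t) c = nth d (run r s2 t) c.
Proof.
move=> hs; elim: t c => [|t IH] c hc hw /=; first by apply: hw; rewrite addn0.
have hs' : size (run r s1 t) = size (run r s2 t) by rewrite !size_run.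
rewrite (@nth_gstep (r t) (run r s1 t) d) ?size_run //.
rewrite (@nth_gstep (r t) (run r s2 t) d) ?size_run -?hs //.
have hnbr k : c <= k.+1 -> k <= c.+1 -> nbr (run r s1 t) k = nbr (run r s2 t) k.
  move=> h1 h2; rewrite !(nbrE d) -hs' size_run.
  by case: ifP => // hk; congr Some; apply: IH => // e h3 h4; apply: hw; lia.
rewrite IH //; last by move=> e h1 h2; apply: hw; lia.
rewrite (hnbr c.+1) //; last lia.
by case: c {hc hw} hnbr => [|c] hnbr //; rewrite (hnbr c) //; lia.
Qed.

Definition acc_at (t n : nat) (x : seq Sigma) (R : {ffun 'I_t * 'I_n -> bool}) :=
  [exists j : 'I_t, all_acc (run (coins R) (init C x) j)].

Definition acc_set t n x := [set R : {ffun 'I_t * 'I_n -> bool} | acc_at x R].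

Lemma acc_probE T x n : size x = n ->
  acc_prob C T x = (#|acc_set (T n) n x|%:R / (2 ^ (T n * n))%:R)%R.
Proof. by move=> <-. Qed.

Lemma acc_prob_geE T x n k m : size x = n -> 0 < k ->
  (m%:R / k%:R <= acc_prob C T x)%R = (m * 2 ^ (T n * n) <= k * #|acc_set (T n) n x|).
Proof.
move=> sx hk; rewrite (acc_probE T sx) ler_pdivrMr ?ltr0n // mulrAC.
by rewrite ler_pdivlMr ?ltr0n ?expn_gt0 // -!natrM ler_nat mulnC [k * _]mulnC.
Qed.

Lemma acc_prob_leE T x n k m : size x = n -> 0 < k ->
  (acc_prob C T x <= m%:R / k%:R)%R = (k * #|acc_set (T n) n x| <= m * 2 ^ (T n * n)).
Proof.
move=> sx hk; rewrite (acc_probE T sx) ler_pdivlMr ?ltr0n // mulrAC.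
by rewrite ler_pdivrMr ?ltr0n ?expn_gt0 // -!natrM ler_nat mulnC [m * _]mulnC.
Qed.

Lemma acc_prob_eq0 T x n : size x = n ->
  acc_prob C T x = 0%R -> acc_set (T n) n x = set0.
Proof.
move=> sx; rewrite (acc_probE T sx) => /eqP.
by rewrite mulf_eq0 invr_eq0 !pnatr_eq0 expn_eq0 orbF cards_eq0 => /eqP.
Qed.

Lemma acc_prob_le1 T x : (acc_prob C T x <= 1)%R.
Proof.
rewrite (acc_probE T (erefl (size x))) ler_pdivrMr ?ltr0n ?expn_gt0 // mul1r ler_nat.
by rewrite -card_coin_matrices max_card.
Qed.

End Runs.

Lemma coinsE t n (R : {ffun 'I_t * 'I_n -> bool}) j i (hj : j < t) (hi : i < n) :
  coins R j i = R (Ordinal hj, Ordinal hi).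
Proof.
rewrite /coins; case: insubP => [j' _ ej|]; last by rewrite hj.
case: insubP => [i' _ ei|]; last by rewrite hi.
by congr (R (_, _)); apply: val_inj.
Qed.

Lemma coins_out t n (R : {ffun 'I_t * 'I_n -> bool}) j i :
  ~~ ((j < t) && (i < n)) -> coins R j i = false.
Proof.
move=> h; rewrite /coins; case: insubP => [j' hj _|] //.
by case: insubP => [i' hi _|] //; rewrite hj hi in h.
Qed.

Lemma one_sub_half : (1 - 1 / 2 = 1 / 2 :> rat)%R.
Proof. by rewrite -[1%R in LHS](@divff _ 2) // -mulrBl. Qed.

Lemma two_sided_of_gap (Sigma : finType) (C : PACA Sigma) T (L : seq Sigma -> Prop) :
  has_time C T ->
  (forall x, (0 < size x)%N ->
     (L x -> 2 / 3 <= acc_prob C T x)%R /\ (~ L x -> acc_prob C T x <= 1 / 3)%R) ->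
  two_sided C T L.
Proof.
move=> HT Hgap; split=> // x hx; have [hin hout] := Hgap x hx.
have e : (1 - 1 / 3 = 2 / 3 :> rat)%R by rewrite -[1%R in LHS](@divff _ 3) // -mulrBl.
rewrite e; split; split=> [|h].
- exact: hin.
- by apply: NNPP => /hout; lra.
- exact: hout.
- by move=> /hin; lra.
Qed.

Section Amplification.
Variables (Sigma : finType) (C : PACA Sigma).

(* A cell holds one state of each copy of [C]; the flag names the copy that
   moves next, and acceptance is read off that copy. *)
Definition amp_st : finType := (st C * st C * bool)%type.

Definition amp_inp (a : Sigma) : amp_st := (inp C a, inp C a, false).

Lemma amp_inp_inj : injective amp_inp.
Proof. by move=> a b [] /(@inp_inj _ C). Qed.

Definition amp_acc : {set amp_st} :=
  [set q : amp_st | if q.2 then q.1.2 \in acc C else q.1.1 \in acc C].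

Definition amp_delta (c : bool) (l : option amp_st) (q : amp_st) (r : option amp_st) :=
  let del := if c then @delta1 _ C else @delta0 _ C in
  if q.2 then (q.1.1, del (omap (fun p => p.1.2) l) q.1.2 (omap (fun p => p.1.2) r), false)
  else (del (omap (fun p => p.1.1) l) q.1.1 (omap (fun p => p.1.1) r), q.1.2, true).

Definition amplify : PACA Sigma :=
  MkPACA amp_inp_inj amp_acc (amp_delta false) (amp_delta true).

Definition amp_conf (s1 s2 : seq (st C)) (b : bool) : seq (st amplify) :=
  map (fun p => (p.1, p.2, b)) (zip s1 s2).

Lemma size_amp_conf s1 s2 b : size s1 = size s2 -> size (amp_conf s1 s2 b) = size s1.
Proof. by move=> h; rewrite size_map size_zip h minnn. Qed.

Lemma nth_amp_conf s1 s2 b d1 d2 b' i : size s1 = size s2 -> i < size s1 ->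
  nth (d1, d2, b') (amp_conf s1 s2 b) i = (nth d1 s1 i, nth d2 s2 i, b).
Proof.
by move=> h hi; rewrite (nth_map (d1, d2)) ?size_zip ?h ?minnn -?h // nth_zip.
Qed.

Lemma nbr_amp_conf1 s1 s2 b k : size s1 = size s2 ->
  omap (fun p : amp_st => p.1.1) (nbr (amp_conf s1 s2 b) k) = nbr s1 k.
Proof.
move=> h; rewrite /nbr /amp_conf -!map_comp.
elim: s1 s2 h k => [|a s1 IH] [|a' s2] //=; first by move=> _ [].
by move=> [h] [|k] //=; exact: IH.
Qed.

Lemma nbr_amp_conf2 s1 s2 b k : size s1 = size s2 ->
  omap (fun p : amp_st => p.1.2) (nbr (amp_conf s1 s2 b) k) = nbr s2 k.
Proof.
move=> h; rewrite /nbr /amp_conf -!map_comp.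
elim: s1 s2 h k => [|a s1 IH] [|a' s2] //=; first by move=> _ [].
by move=> [h] [|k] //=; exact: IH.
Qed.

Lemma gstep_amp_conf coin s1 s2 b : size s1 = size s2 ->
  gstep coin (amp_conf s1 s2 b) =
  if b then amp_conf s1 (gstep coin s2) false else amp_conf (gstep coin s1) s2 true.
Proof.
case: s1 s2 => [|a s1] [|a' s2] // h; first by case: b.
apply: (@eq_from_nth _ (a, a, false)).
  by case: b; rewrite (@size_gstep _ amplify) !size_amp_conf ?size_gstep.
move=> i; rewrite (@size_gstep _ amplify) size_amp_conf // => hi.
rewrite (@nth_gstep _ amplify coin _ (a, a, false)) ?size_amp_conf // nth_amp_conf //.
case: b; rewrite nth_amp_conf ?size_gstep -?h // (@nth_gstep _ C coin _ a) -?h //;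
  rewrite /= /amp_delta; case: i hi => [|i] hi; case: (coin _) => /=;
  by rewrite ?nbr_amp_conf1 ?nbr_amp_conf2.
Qed.

Lemma all_acc_amp_conf s1 s2 b : size s1 = size s2 ->
  all_acc (amp_conf s1 s2 b) = all_acc (if b then s2 else s1).
Proof.
move=> h; rewrite /all_acc /amp_conf all_map.
case: b; [rewrite -[in RHS](unzip2_zip (eq_leq (esym h))) |
          rewrite -[in RHS](unzip1_zip (eq_leq h))];
  by rewrite /unzip1 /unzip2 all_map; apply: eq_all => p; rewrite /= inE.
Qed.

Definition even_coins (r : nat -> nat -> bool) j := r j.*2.
Definition odd_coins (r : nat -> nat -> bool) j := r j.*2.+1.

Lemma run_amplify r s j :
  run r (amp_conf s s false) j =
  amp_conf (run (even_coins r) s (uphalf j)) (run (odd_coins r) s j./2) (odd j).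
Proof.
elim: j => //= j ->; rewrite gstep_amp_conf ?size_run //.
move: (odd_double_half j) (uphalf_half j); case: (odd j) => /= ej ->.
  by rewrite -[in r j]ej add1n.
by rewrite -[in r j]ej add0n.
Qed.

Lemma all_acc_run_amplify r s j :
  all_acc (run r (amp_conf s s false) j) =
  all_acc (if odd j then run (odd_coins r) s j./2 else run (even_coins r) s (uphalf j)).
Proof. by rewrite run_amplify all_acc_amp_conf ?size_run. Qed.

Lemma init_amplify x : init amplify x = amp_conf (init C x) (init C x) false.
Proof. by elim: x => //= a x ->. Qed.

Lemma has_time_amplify T : has_time C T -> has_time amplify (fun n => (T n).*2).
Proof.
move=> HT x hx r j; rewrite init_amplify all_acc_run_amplify.
case: (odd j) => /(HT x hx) [k hk ak].
  exists k.*2.+1; first by rewrite ltn_Sdouble.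
  by rewrite all_acc_run_amplify /= odd_double uphalf_double.
exists k.*2; first by rewrite ltn_double.
by rewrite all_acc_run_amplify odd_double uphalf_double.
Qed.

Section CoinRows.
Variables (t n : nat).

Definition even_rows (R : {ffun 'I_t.*2 * 'I_n -> bool}) : {ffun 'I_t * 'I_n -> bool} :=
  [ffun p : 'I_t * 'I_n => R (Ordinal (etrans (ltn_double p.1 t) (ltn_ord p.1)), p.2)].

Definition odd_rows (R : {ffun 'I_t.*2 * 'I_n -> bool}) : {ffun 'I_t * 'I_n -> bool} :=
  [ffun p : 'I_t * 'I_n => R (Ordinal (etrans (ltn_Sdouble p.1 t) (ltn_ord p.1)), p.2)].

Definition split_rows R := (even_rows R, odd_rows R).

Definition interleave_rows (u : {ffun 'I_t * 'I_n -> bool} * {ffun 'I_t * 'I_n -> bool})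
  : {ffun 'I_t.*2 * 'I_n -> bool} :=
  [ffun p : 'I_t.*2 * 'I_n => (if odd p.1 then u.2 else u.1)
               (Ordinal (etrans (ltn_half_double p.1 t) (ltn_ord p.1)), p.2)].

Lemma interleave_rowsK : cancel interleave_rows split_rows.
Proof.
move=> [u1 u2]; congr pair; apply/ffunP => -[j i]; rewrite !ffunE /= ?odd_double /=;
  by congr (_ (_, _)); apply: val_inj; rewrite /= ?doubleK ?uphalf_double.
Qed.

Lemma split_rowsK : cancel split_rows interleave_rows.
Proof.
move=> R; apply/ffunP => -[j i]; rewrite !ffunE /=; case ho: (odd j); rewrite ffunE;
  by congr (R (_, _)); apply: val_inj => /=; rewrite -[RHS](odd_double_half j) ho.
Qed.

Lemma coins_even_rows R : coins (even_rows R) = even_coins (coins R).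
Proof.
apply: functional_extensionality => j; apply: functional_extensionality => i.
rewrite /even_coins; case: (boolP ((j < t) && (i < n))) => [/andP [hj hi]|h].
  rewrite (coinsE _ hj hi) (coinsE _ (etrans (ltn_double j t) hj) hi) ffunE.
  by congr (R (_, _)); apply: val_inj.
by rewrite !coins_out // ltn_double.
Qed.

Lemma coins_odd_rows R : coins (odd_rows R) = odd_coins (coins R).
Proof.
apply: functional_extensionality => j; apply: functional_extensionality => i.
rewrite /odd_coins; case: (boolP ((j < t) && (i < n))) => [/andP [hj hi]|h].
  rewrite (coinsE _ hj hi) (coinsE _ (etrans (ltn_Sdouble j t) hj) hi) ffunE.
  by congr (R (_, _)); apply: val_inj.
by rewrite !coins_out // ltn_Sdouble.
Qed.

Lemma acc_at_amplify x R :
  acc_at amplify x R = acc_at C x (even_rows R) || acc_at C x (odd_rows R).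
Proof.
rewrite /acc_at coins_even_rows coins_odd_rows init_amplify; apply/existsP/orP.
  case=> j; rewrite all_acc_run_amplify uphalf_half; case: (odd j) => acc_j.
    by right; apply/existsP; exists (Ordinal (etrans (ltn_half_double j t) (ltn_ord j))).
  by left; apply/existsP; exists (Ordinal (etrans (ltn_half_double j t) (ltn_ord j))).
case=> /existsP [k acc_k].
  exists (Ordinal (etrans (ltn_double k t) (ltn_ord k))).
  by rewrite all_acc_run_amplify /= odd_double uphalf_double.
exists (Ordinal (etrans (ltn_Sdouble k t) (ltn_ord k))).
by rewrite all_acc_run_amplify /= odd_double uphalf_double.
Qed.

Lemma card_rejecting_amplify x :
  #|~: acc_set amplify t.*2 n x| = #|~: acc_set C t n x| ^ 2.
Proof.
have -> : ~: acc_set amplify t.*2 n x =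
          interleave_rows @: setX (~: acc_set C t n x) (~: acc_set C t n x).
  rewrite (can2_imset_pre _ interleave_rowsK split_rowsK); apply/setP => R.
  by rewrite !inE acc_at_amplify negb_or.
by rewrite card_imset ?cardsX //; exact: can_inj interleave_rowsK.
Qed.

End CoinRows.

Lemma acc_prob_amplify T x :
  acc_prob amplify (fun n => (T n).*2) x = (1 - (1 - acc_prob C T x) ^+ 2)%R.
Proof.
rewrite !(acc_probE _ _ (erefl (size x))); set t := T (size x); set n := size x.
have c1 := cardsC (acc_set C t n x); have c2 := cardsC (acc_set amplify t.*2 n x).
have eN : 2 ^ (t.*2 * n) = 2 ^ (t * n) * 2 ^ (t * n) by rewrite -expnD addnn -!mul2n mulnA.
rewrite card_rejecting_amplify !card_coin_matrices eN in c1 c2 *.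
move: c1 c2; set N := 2 ^ (t * n); set a := #|acc_set C t n x|; set b := #|~: _|.
set a2 := #|acc_set amplify t.*2 n x| => c1 c2.
have hN : (N%:R != 0 :> rat)%R by rewrite pnatr_eq0 -lt0n expn_gt0.
have -> : (a%:R = N%:R - b%:R :> rat)%R by rewrite -c1 natrD addrK.
have -> : (a2%:R = N%:R * N%:R - b%:R ^+ 2 :> rat)%R.
  by rewrite -natrX -natrM -c2 natrD addrK.
by rewrite natrM; field.
Qed.

End Amplification.

Lemma two_sided_amplify (Sigma : finType) (C : PACA Sigma) T (L : seq Sigma -> Prop) :
  one_sided C T L -> two_sided (amplify C) (fun n => (T n).*2) L.
Proof.
case=> HT HL; apply: two_sided_of_gap; first exact: has_time_amplify.
move=> x hx; rewrite acc_prob_amplify; have [[hin _] [hout _]] := HL x hx.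
have p_le1 := acc_prob_le1 C T x.
split=> [/hin | /hout ->]; last by lra.
by rewrite one_sub_half; nra.
Qed.

Definition fixed_on (D : finType) (s : seq D) (g : D -> bool) : {set {ffun D -> bool}} :=
  [set R : {ffun D -> bool} | all (fun z => R z == g z) s].

Lemma card_fixed_on (D : finType) (s : seq D) (g : D -> bool) : uniq s ->
  2 ^ size s * #|fixed_on s g| = 2 ^ #|D|.
Proof.
move=> /card_uniqP <-.
pose F z : pred bool := if z \in s then pred1 (g z) else predT.
have -> : #|fixed_on s g| = #|family F|.
  apply: eq_card => R; rewrite /fixed_on inE; apply/allP/familyP => h z.
    by rewrite /F; case: ifP => // /h.
  by move=> zs; have := h z; rewrite /F zs.
rewrite card_family foldrE big_image /= (bigID (mem s)) /=.
have -> : \prod_(z in s) #|F z| = 1 by apply: big1 => z zs; rewrite /F zs card1.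
have -> : \prod_(z | z \notin s) #|F z| = 2 ^ #|[predC s]|.
  by rewrite -prod_nat_const; apply: eq_bigr => z /negbTE zs; rewrite /F zs card_bool.
by rewrite mul1n -expnD cardC.
Qed.

Definition atmost1 (x : seq bool) : Prop :=
  forall i j, nth false x i -> nth false x j -> i = j.

(* Input 0 is state 0, accepting forever; input 1 is state 1.  From 1 a coin 0
   leads to the accepting state 2 and a coin 1 to state 3, from which a coin 0
   leads to the accepting state 4; everything else ends in the rejecting
   sink 5.  So a 1-cell is accepting at step 1 or 2, with probability 1/2 and
   1/4, and never at any other step. *)
Definition trial_step (c : bool) (q : 'I_6) : 'I_6 :=
  inord (match q : nat with
         | 0 => 0 | 1 => if c then 3 else 2 | 3 => if c then 5 else 4 | _ => 5 end).

Lemma trial_stepE c q : trial_step c q =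
  match q : nat with 0 => 0 | 1 => if c then 3 else 2 | 3 => if c then 5 else 4 | _ => 5 end
  :> nat.
Proof. by rewrite inordK //; case: (q : nat) => [|[|[|[|]]]] //; case: c. Qed.

Definition trial_inp (b : bool) : 'I_6 := inord b.

Lemma trial_inpE b : trial_inp b = b :> nat.
Proof. by rewrite inordK //; case: b. Qed.

Lemma trial_inp_inj : injective trial_inp.
Proof. by move=> [] [] // /(congr1 val) /=; rewrite !trial_inpE. Qed.

Definition trial : PACA bool :=
  MkPACA trial_inp_inj [set q : 'I_6 | (q : nat) \in [:: 0; 2; 4]]
         (fun _ q _ => trial_step false q) (fun _ q _ => trial_step true q).

Fixpoint trial_run (r : nat -> nat -> bool) (i : nat) (q : 'I_6) (t : nat) : 'I_6 :=
  if t is t'.+1 then trial_step (r t' i) (trial_run r i q t') else q.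

Lemma nth_run_trial r (s : seq 'I_6) t i : i < size s ->
  nth (trial_inp false) (run (C:=trial) r s t) i = trial_run r i (nth (trial_inp false) s i) t.
Proof.
move=> hi; elim: t => //= t IH.
by rewrite (@nth_gstep _ trial (r t) _ (trial_inp false)) ?size_run // IH; case: (r t i).
Qed.

Lemma trial_run_zero_acc r i t : trial_run r i (trial_inp false) t \in acc trial.
Proof.
rewrite inE; suff -> : trial_run r i (trial_inp false) t = 0 :> nat by [].
by elim: t => [|t IH] /=; rewrite ?trial_inpE // trial_stepE IH.
Qed.

Definition one_cell_acc (r : nat -> nat -> bool) i t :=
  match t with 1 => ~~ r 0 i | 2 => r 0 i && ~~ r 1 i | _ => false end.

Lemma trial_run_one_acc r i t :
  (trial_run r i (trial_inp true) t \in acc trial) = one_cell_acc r i t.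
Proof.
have sink k : trial_run r i (trial_inp true) k.+3 = 5 :> nat.
  elim: k => [|k IH]; last by rewrite [trial_run _ _ _ _]/= trial_stepE IH.
  by rewrite /= !trial_stepE trial_inpE /=; case: (r 0 i); case: (r 1 i); case: (r 2 i).
rewrite inE; case: t => [|[|[|t]]]; rewrite ?sink //= ?trial_stepE trial_inpE //=.
  by case: (r 0 i).
by case: (r 0 i); case: (r 1 i).
Qed.

Lemma all_acc_trial r (x : seq bool) t :
  all_acc (run (C:=trial) r (init trial x) t) =
  [forall i : 'I_(size x), nth false x i ==> one_cell_acc r i t].
Proof.
apply/(all_nthP (trial_inp false))/forallP.
  move=> h i; apply/implyP => xi; have := h i.
  rewrite (@size_run _ trial) size_map ltn_ord nth_run_trial ?size_map //.
  by rewrite (@nth_init _ trial x false i) xi trial_run_one_acc => ->.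
move=> h i; rewrite (@size_run _ trial) size_map => hi; rewrite nth_run_trial ?size_map //.
rewrite (@nth_init _ trial x false i); case xi: (nth false x i); last exact: trial_run_zero_acc.
by have := h (Ordinal hi); rewrite /= xi trial_run_one_acc.
Qed.

Lemma has_time_trial : has_time trial (fun _ => 3).
Proof.
move=> x _ r j; rewrite all_acc_trial => /forallP h.
case: j h => [|[|[|j]]] h; [exists 0 | exists 1 | exists 2 | exists 0] => //;
  rewrite all_acc_trial; apply/forallP => // i.
Qed.

Lemma coins_ord t n (R : {ffun 'I_t * 'I_n -> bool}) (j : 'I_t) (i : 'I_n) :
  coins R j i = R (j, i).
Proof. by rewrite (coinsE R (ltn_ord j) (ltn_ord i)); congr (R (_, _)); apply: val_inj. Qed.

Lemma one_cell_acc_some r i : [exists j : 'I_3, one_cell_acc r i j] = ~~ (r 0 i && r 1 i).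
Proof.
apply/existsP/idP => [[[[|[|[|j]]] hj]] //=|]; first by case: (r 0 i).
  by case: (r 0 i); case: (r 1 i).
case h0: (r 0 i) => /= h1.
  by exists (Ordinal (isT : 2 < 3)); rewrite /= h0 h1.
by exists (Ordinal (isT : 1 < 3)); rewrite /= h0.
Qed.

Lemma one_cell_acc_both r i k :
  [exists j : 'I_3, one_cell_acc r i j && one_cell_acc r k j] ->
  ~~ r 0 i && ~~ r 0 k || [&& r 0 i, ~~ r 1 i, r 0 k & ~~ r 1 k].
Proof.
by case/existsP => -[[|[|[|j]]] hj] //=; case: (r 0 i); case: (r 1 i); case: (r 0 k); case: (r 1 k).
Qed.

Section TrialCount.
Variable x : seq bool.
Local Notation n := (size x).

Let row0 : 'I_3 := ord0.
Let row1 : 'I_3 := Ordinal (isT : 1 < 3).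

Lemma acc_at_trial (R : {ffun 'I_3 * 'I_n -> bool}) : acc_at trial x R =
  [exists j : 'I_3, [forall i : 'I_n, nth false x i ==> one_cell_acc (coins R) i j]].
Proof. by apply: eq_existsb => j; rewrite /acc_at all_acc_trial. Qed.

Lemma acc_set_trial_none : (forall i, nth false x i = false) -> acc_set trial 3 n x = setT.
Proof.
move=> h; apply/setP => R; rewrite !inE acc_at_trial; apply/existsP; exists row0.
by apply/forallP => i; rewrite h.
Qed.

Lemma rej_set_trial_one (p : 'I_n) : (forall i, nth false x i = (i == p :> nat)) ->
  ~: acc_set trial 3 n x = fixed_on [:: (row0, p); (row1, p)] (fun=> true).
Proof.
move=> h; apply/setP => R; rewrite /fixed_on !inE acc_at_trial /= andbT !eqb_id.
have e0 : coins R 0 p = R (row0, p) := coins_ord R row0 p.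
have e1 : coins R 1 p = R (row1, p) := coins_ord R row1 p.
rewrite -e0 -e1 -[RHS]negbK -one_cell_acc_some; congr (~~ _).
apply: eq_existsb => j; apply/forallP/idP => [/(_ p)|hj i].
  by rewrite h eqxx.
by rewrite h; apply/implyP => /eqP/val_inj ->.
Qed.

Lemma acc_set_trial_two (p q : 'I_n) : p != q -> nth false x p -> nth false x q ->
  acc_set trial 3 n x \subset
    fixed_on [:: (row0, p); (row0, q)] (fun=> false) :|:
    fixed_on [:: (row0, p); (row1, p); (row0, q); (row1, q)] (fun z => z.1 == row0).
Proof.
move=> hpq xp xq; apply/subsetP => R.
rewrite /fixed_on !inE acc_at_trial /= !andbT !eqb_id.
have e0 (k : 'I_n) : coins R 0 k = R (row0, k) := coins_ord R row0 k.
have e1 (k : 'I_n) : coins R 1 k = R (row1, k) := coins_ord R row1 k.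
rewrite -!e0 -!e1 (_ : row1 == row0 = false) // !eqbF_neg => acc.
apply: one_cell_acc_both; case/existsP: acc => j /forallP hj.
by apply/existsP; exists j; have := hj p; have := hj q; rewrite xp xq /= => -> ->.
Qed.

Lemma acc_prob_trial_in : atmost1 x -> (3 / 4 <= acc_prob trial (fun=> 3%N) x)%R.
Proof.
move=> hx; rewrite (acc_prob_geE trial _ 3 (erefl n)) //.
have := cardsC (acc_set trial 3 n x); rewrite card_coin_matrices.
case: (pickP (fun i : 'I_n => nth false x i)) => [p xp | none].
  have hp i : nth false x i = (i == p :> nat).
    by apply/idP/eqP => [xi | ->]; [exact: hx | exact: xp].
  have u : uniq [:: (row0, p); (row1, p)] by [].
  have := card_fixed_on (fun=> true) u; rewrite card_prod !card_ord -(rej_set_trial_one hp) /=.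
  by set b := #|~: _|; lia.
rewrite acc_set_trial_none => [|i]; first by rewrite cardsT card_coin_matrices; lia.
case: (ltnP i n) => [hi | hi]; last by rewrite nth_default.
exact: (none (Ordinal hi)).
Qed.

Lemma acc_prob_trial_out : ~ atmost1 x -> (acc_prob trial (fun=> 3%N) x <= 5 / 16)%R.
Proof.
move=> /not_all_ex_not [i /not_all_ex_not [j hij]].
have nij : i != j by apply/eqP => e; apply: hij => _ _.
have xi : nth false x i by case: (nth false x i) hij => // hij; exfalso; apply: hij.
have xj : nth false x j by case: (nth false x j) hij => // hij; exfalso; apply: hij.
have hi : i < n by case: ltnP xi => // h; rewrite nth_default.
have hj : j < n by case: ltnP xj => // h; rewrite nth_default.
pose p := Ordinal hi; pose q := Ordinal hj.
have pq : p != q by [].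
rewrite (acc_prob_leE trial _ 5 (erefl n)) //.
have := leq_trans (subset_leq_card (acc_set_trial_two pq xi xj)) (leq_card_setU _ _).
have uA : uniq [:: (row0, p); (row0, q)] by rewrite /= inE xpair_eqE eqxx /= pq.
have uB : uniq [:: (row0, p); (row1, p); (row0, q); (row1, q)].
  by rewrite /= !inE !xpair_eqE !eqxx (negbTE pq).
have := card_fixed_on (fun=> false) uA; have := card_fixed_on (fun z => z.1 == row0) uB.
rewrite card_prod !card_ord /=.
by set A := #|fixed_on [:: _; _] _|; set B := #|fixed_on [:: _; _; _; _] _|; lia.
Qed.

End TrialCount.

Lemma two_sided_trial : two_sided trial (fun=> 3%N) atmost1.
Proof.
apply: two_sided_of_gap; first exact: has_time_trial.
by move=> x _; split=> [/acc_prob_trial_in | /acc_prob_trial_out]; lra.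
Qed.

Lemma nth_mkseq_bool (f : nat -> bool) n e : nth false (mkseq f n) e = (e < n) && f e.
Proof. by case: ltnP => h; [rewrite nth_mkseq | rewrite nth_default ?size_mkseq]. Qed.

Lemma sum_card_incidence (I U : finType) (S : I -> {set U}) :
  \sum_i #|S i| = \sum_u #|[set i | u \in S i]|.
Proof.
have cardE' (T : finType) (A : {set T}) : #|A| = \sum_u (u \in A : nat).
  by rewrite -sum1_card big_mkcond /=; apply: eq_bigr => u _; case: (u \in A).
under eq_bigr => i _ do rewrite cardE'.
by rewrite exchange_big; apply: eq_bigr => u _; rewrite cardE'; apply: eq_bigr => i _; rewrite inE.
Qed.

Section SpacedWords.
Variables (t n : nat).

Definition spot i := t.*2 * i.
Definition unit_word i := mkseq (fun e => e == spot i) n.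
Definition pair_word i i' := mkseq (fun e => (e == spot i) || (e == spot i')) n.

Lemma atmost1_unit_word i : atmost1 (unit_word i).
Proof. by move=> a b; rewrite !nth_mkseq_bool => /andP [_ /eqP ->] /andP [_ /eqP ->]. Qed.

Lemma not_atmost1_pair_word i i' : 0 < t -> i != i' -> spot i < n -> spot i' < n ->
  ~ atmost1 (pair_word i i').
Proof.
move=> tp ne hi hi' /(_ (spot i) (spot i')).
rewrite !nth_mkseq_bool hi hi' !eqxx orbT => /(_ isT isT) /eqP.
by rewrite eqn_mul2l double_eq0 eqn0Ngt tp (negbTE ne).
Qed.

Variable C : PACA bool.

Lemma all_acc_pair_word r j i i' : j < t -> i != i' ->
  all_acc (run r (init C (unit_word i)) j) -> all_acc (run r (init C (unit_word i')) j) ->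
  all_acc (run r (init C (pair_word i i')) j).
Proof.
move=> hj hii; have sep : (spot i + t.*2 <= spot i') || (spot i' + t.*2 <= spot i).
  by rewrite /spot; case: (ltngtP i i') hii => // h _; nia.
move=> /(all_nthP (inp C false)) H1 /(all_nthP (inp C false)) H2.
apply/(all_nthP (inp C false)) => c; rewrite size_run size_init size_mkseq => hc.
case: (boolP ((c <= spot i' + j) && (spot i' <= c + j))) => hw.
  rewrite (@nth_run_local _ C r _ (init C (unit_word i'))) ?size_init ?size_mkseq //.
    by apply: H2; rewrite size_run size_init size_mkseq.
  move=> e h1 h2; rewrite !nth_init !nth_mkseq_bool; congr (inp C (_ && _)).
  by have /negbTE -> : e != spot i by apply/eqP => ei; move: hw sep h1 h2 hj; rewrite ei; lia.
rewrite (@nth_run_local _ C r _ (init C (unit_word i))) ?size_init ?size_mkseq //.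
  by apply: H1; rewrite size_run size_init size_mkseq.
move=> e h1 h2; rewrite !nth_init !nth_mkseq_bool; congr (inp C (_ && _)).
have /negbTE -> : e != spot i' by apply/eqP => ei; rewrite ei in h1 h2; rewrite h1 h2 in hw.
by rewrite orbF.
Qed.

Section RejectedPairs.
Variable m : nat.
Hypothesis pair_rej : forall i i' : 'I_m, i != i' -> acc_set C t n (pair_word i i') = set0.

Lemma card_accepted_unit_words (R : {ffun 'I_t * 'I_n -> bool}) :
  #|[set i : 'I_m | R \in acc_set C t n (unit_word i)]| <= t.+1.
Proof.
pose f (i : 'I_m) := [pick j : 'I_t | all_acc (run (coins R) (init C (unit_word i)) j)].
rewrite -(@card_in_imset _ _ f) => [|i1 i2].
  by rewrite (leq_trans (max_card _)) // card_option card_ord.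
rewrite !inE => /existsP [j1 h1] _; rewrite /f; case: pickP => [k hk|/(_ j1)]; last by rewrite h1.
case: pickP => [k' hk' [ekk]|//]; move: hk'; rewrite -ekk => hk'.
apply/eqP; apply: contraTT isT => hne.
have : R \in acc_set C t n (pair_word i1 i2).
  by rewrite inE; apply/existsP; exists k; apply: all_acc_pair_word.
by rewrite pair_rej // inE.
Qed.

Lemma sum_card_accepted_unit_words :
  \sum_(i : 'I_m) #|acc_set C t n (unit_word i)| <= 2 ^ (t * n) * t.+1.
Proof.
rewrite sum_card_incidence -card_coin_matrices -sum_nat_const.
by apply: leq_sum => R _; exact: card_accepted_unit_words.
Qed.

End RejectedPairs.

End SpacedWords.

Lemma not_one_sided_atmost1_sublinear (C : PACA bool) T :
  one_sided C T atmost1 -> ~ little_o_sqrt T.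
Proof.
case=> _ HL /(_ 4 isT) [N0 /(_ N0.+1 (leqnSn _))]; set n := N0.+1; set t := T n => small.
have spot_lt (i : 'I_t.*2.+3) : spot t i < n.
  move: (nat_of_ord i) (ltn_ord i) small => k; rewrite /spot expnS expn1 -!mul2n => hk.
  by case: (posnP t) => [->|tp] //; nia.
have unit_acc (i : 'I_t.*2.+3) : 2 ^ (t * n) <= 2 * #|acc_set C t n (unit_word t n i)|.
  have := HL (unit_word t n i); rewrite size_mkseq => /(_ isT) [[+ _] _].
  rewrite one_sub_half -[(1 / 2)%R]/(1%:R / 2%:R)%R (acc_prob_geE _ _ _ (size_mkseq _ _)) //.
  by rewrite mul1n; apply; exact: atmost1_unit_word.
have pair_rej (i i' : 'I_t.*2.+3) : i != i' -> acc_set C t n (pair_word t n i i') = set0.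
  move=> ne; case: (posnP t) => [t0 | tp].
    apply/setP => R; rewrite !inE; apply/negbTE/negP => /existsP [j _].
    by have := ltn_ord j; lia.
  have := HL (pair_word t n i i'); rewrite size_mkseq => /(_ isT) [_ [+ _]].
  move=> /(_ (not_atmost1_pair_word tp ne (spot_lt i) (spot_lt i'))).
  exact: acc_prob_eq0 (size_mkseq _ _).
have := sum_card_accepted_unit_words pair_rej.
have : \sum_(i : 'I_t.*2.+3) 2 ^ (t * n) <=
       2 * \sum_(i : 'I_t.*2.+3) #|acc_set C t n (unit_word t n i)|.
  by rewrite big_distrr; apply: leq_sum => i _; exact: unit_acc.
rewrite sum_nat_const card_ord -mul2n; have := expn_gt0 2 (t * n).
by set N := 2 ^ (t * n); set S := \sum_(i < _) _; nia.
Qed.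

Theorem theorem1 :
  (forall (Sigma : finType) (C : PACA Sigma) (T : nat -> nat) (L : seq Sigma -> Prop),
      one_sided C T L ->
      exists (C' : PACA Sigma) (T' : nat -> nat), two_sided C' T' L /\ bigO T' T)
  /\
  (exists (Sigma : finType) (L : seq Sigma -> Prop),
      (exists (C : PACA Sigma) (k : nat), two_sided C (fun _ => k) L) /\
      ~ (exists (C : PACA Sigma) (T : nat -> nat), one_sided C T L /\ little_o_sqrt T)).
Proof.
split.
  move=> Sigma C T L HC; exists (amplify C), (fun n => (T n).*2); split.
    exact: two_sided_amplify.
  by exists 2, 0 => n _ _; rewrite -mul2n.
exists bool, atmost1; split; first by exists trial, 3; exact: two_sided_trial.
by case=> C [T [HC small]]; exact: not_one_sided_atmost1_sublinear HC small.
Qed.
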